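(* Assume that for every $z\in\mathcal Z_s$ the maximum $\max_{\alpha\in\mathbb R^k,\beta\in\mathbb R^m_+}L(z,\alpha,\beta)$ is attained, and let $\mathrm{BR}(z)$ be a maximizer selected by a fixed deterministic rule (a single-valued map). Starting from any $(z_0,\alpha_0,\beta_0)$ with $z_0\in\mathcal Z_s$, consider the iteration $$(\alpha_{t+1},\beta_{t+1})=\mathrm{BR}(z_t),\qquad z_{t+1}=\mathds 1_n(\mathcal J(\alpha_t,\beta_t)).$$ Then the sequence $(z_t,\alpha_t,\beta_t)$ is eventually periodic (after finitely many iterations it enters a cycle). If the cycle has length one, i.e. the iterates are eventually constant equal to $(\bar z,\bar\alpha,\bar\beta)$, then $\bar z$ is an optimal solution of the outer minimization in $\min_{z\in\mathcal Z_s}\max_{\alpha\in\mathbb R^k,\beta\in\mathbb R^m_+}L(z,\alpha,\beta)$, and $(\bar z,\bar\alpha,\bar\beta)$ is a saddle point: $L(\bar z,\alpha,\beta)\le L(\bar z,\bar\alpha,\bar\beta)\le L(z,\bar\alpha,\bar\beta)$ for all $z\in\mathcal Z_s$, $\alpha\in\mathbb R^k$, $\beta\in\mathbb R^m_+$.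
   Context: Let $Q\in\mathbb R^{n\times n}$ be symmetric positive semidefinite with eigendecomposition $Q=\sum_{i=1}^n\lambda_i v_iv_i^\top$, $\lambda_1\ge\cdots\ge\lambda_n\ge0$, $\{v_i\}$ orthonormal. Let $c\in\mathbb R^n$, $A\in\mathbb R^{m\times n}$, $b\in\mathbb R^m$, $\eta>0$, $s\le n$ a positive integer, $k\le n$, $V=[v_1,\dots,v_k]$, $\Lambda=\mathrm{diag}(\lambda_1,\dots,\lambda_k)$. Let $\mathcal Z_s=\{z\in\{0,1\}^n:\sum_j z_j\le s\}$ and $$L(z,\alpha,\beta)=-\beta^\top b-\tfrac14\|\alpha\|_2^2-\tfrac{\eta}{4}(c+V\sqrt\Lambda\alpha+A^\top\beta)^\top\mathrm{diag}(z)(c+V\sqrt\Lambda\alpha+A^\top\beta).$$ For $(\alpha,\beta)$, let $\gamma=c+V\sqrt\Lambda\alpha+A^\top\beta$ and let $\mathcal J(\alpha,\beta)\subseteq[n]$ be the set of $s$ indices with the $s$ largest values of $|\gamma_j|$, ties broken by a fixed deterministic rule; $\mathds 1_n(\mathcal J)\in\{0,1\}^n$ is the indicator vector of $\mathcal J$. *)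

(* R : rcfType (real closed field, needed for Num.sqrt). *)
From HB Require Import structures.
From mathcomp Require Import all_boot all_order all_algebra.
Set Implicit Arguments. Unset Strict Implicit. Unset Printing Implicit Defensive.
Import Order.TTheory GRing.Theory Num.Theory.
Local Open Scope ring_scope.

(* z in Z_s : z in {0,1}^n (encoded as a boolean finite function) with sum z_j <= s *)
Definition Zs (n s : nat) (z : {ffun 'I_n -> bool}) : bool :=
  (\sum_(j < n) nat_of_bool (z j) <= s)%N.

Definition nonneg_vec (R : numDomainType) (m : nat) (x : 'cV[R]_m) : Prop :=
  forall i, 0 <= x i 0.

(* V = [v_1, ..., v_k] (first k eigenvectors as columns) *)
Definition Vmat (R : rcfType) (n k : nat) (hk : (k <= n)%N)
  (v : 'I_n -> 'cV[R]_n) : 'M[R]_(n, k) :=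
  \matrix_(i < n, j < k) v (widen_ord hk j) i 0.

Definition sqrtLam (R : rcfType) (n k : nat) (hk : (k <= n)%N)
  (lam : 'I_n -> R) : 'M[R]_k :=
  diag_mx (\row_(j < k) Num.sqrt (lam (widen_ord hk j))).

Definition gamma (R : rcfType) (n m k : nat) (hk : (k <= n)%N)
  (lam : 'I_n -> R) (v : 'I_n -> 'cV[R]_n) (c : 'cV[R]_n) (A : 'M[R]_(m, n))
  (alpha : 'cV[R]_k) (beta : 'cV[R]_m) : 'cV[R]_n :=
  c + Vmat hk v *m sqrtLam hk lam *m alpha + A^T *m beta.

Definition diagz (R : rcfType) (n : nat) (z : {ffun 'I_n -> bool}) : 'M[R]_n :=
  diag_mx (\row_(j < n) (nat_of_bool (z j))%:R).

Definition Lfun (R : rcfType) (n m k : nat) (hk : (k <= n)%N)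
  (lam : 'I_n -> R) (v : 'I_n -> 'cV[R]_n) (c : 'cV[R]_n) (A : 'M[R]_(m, n))
  (b : 'cV[R]_m) (eta : R)
  (z : {ffun 'I_n -> bool}) (alpha : 'cV[R]_k) (beta : 'cV[R]_m) : R :=
  let g := gamma hk lam v c A alpha beta in
  - (beta^T *m b) 0 0 - 4^-1 * (alpha^T *m alpha) 0 0
  - eta / 4 * (g^T *m diagz R z *m g) 0 0.

Definition is_top_s (R : numDomainType) (n s : nat) (g : 'cV[R]_n)
  (J : {set 'I_n}) : Prop :=
  #|J| = s /\ (forall i j, i \in J -> j \notin J -> `|g j 0| <= `|g i 0|).

Definition indic (n : nat) (J : {set 'I_n}) : {ffun 'I_n -> bool} :=
  [ffun j => j \in J].

From HB Require Import structures.
From mathcomp Require Import all_boot all_order all_algebra.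
Import Order.TTheory GRing.Theory Num.Theory.
Local Open Scope ring_scope.
Set Implicit Arguments. Unset Strict Implicit.

(* Since (alpha_{t+1}, beta_{t+1}) is a
   function of z_t, the whole triple at time t+1 is determined by the pair
   (z_{t+1}, z_t), which ranges over a finite set and evolves by a fixed map;
   by pigeonhole it repeats, so the iterates are eventually periodic.
   If the iterates are eventually constant at (zb, ab, bb), then
   BR zb = (ab, bb) and zb = 1(J(ab, bb)).  The first equation is the
   inequality L(zb, ., .) <= L(zb, ab, bb).  For the second, L(z, a, b)
   decreases with sum_{j in z} gamma_j^2, and a set of s indices carrying
   the largest |gamma_j| maximizes that sum over all sets of at most s
   indices (an exchange argument, [sum_top_set]).  The saddle inequalities
   then give outer optimality of zb by weak duality. *)

Lemma sum_le_dominating (R : realDomainType) (I : finType) (a : I -> R)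
    (D1 D2 : {set I}) :
  (forall j, j \in D2 -> 0 <= a j) ->
  (forall i j, i \in D1 -> j \in D2 -> a i <= a j) ->
  (#|D1| <= #|D2|)%N ->
  \sum_(i in D1) a i <= \sum_(j in D2) a j.
Proof.
move=> a2_ge0 dom card12.
have [D2_0 | D2_gt0] := posnP #|D2|.
  move: card12; rewrite D2_0 leqn0 => /eqP/cards0_eq ->.
  by rewrite big_set0 sumr_ge0.
have S2_ge0 : 0 <= \sum_(j in D2) a j by exact: sumr_ge0.
have double_count : (\sum_(i in D1) a i) *+ #|D2| <= (\sum_(j in D2) a j) *+ #|D1|.
  have -> : (\sum_(i in D1) a i) *+ #|D2| = \sum_(i in D1) \sum_(j in D2) a i.
    by rewrite -sumrMnl; apply: eq_bigr => i _; rewrite sumr_const.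
  have -> : (\sum_(j in D2) a j) *+ #|D1| = \sum_(i in D1) \sum_(j in D2) a j.
    by rewrite exchange_big -sumrMnl; apply: eq_bigr => i _; rewrite sumr_const.
  by apply: ler_sum => i iD1; apply: ler_sum => j jD2; exact: dom.
have : (\sum_(j in D2) a j) *+ #|D1| <= (\sum_(j in D2) a j) *+ #|D2|.
  by rewrite -(subnKC card12) mulrnDr lerDl mulrn_wge0.
by move=> /(le_trans double_count); rewrite lerMn2r eqn0Ngt D2_gt0.
Qed.

Lemma sum_top_set (R : realDomainType) (I : finType) (a : I -> R)
    (J Z : {set I}) :
  (forall i, 0 <= a i) -> (forall i j, i \in J -> j \notin J -> a j <= a i) ->
  (#|Z| <= #|J|)%N -> \sum_(j in Z) a j <= \sum_(j in J) a j.
Proof.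
move=> a_ge0 top cardZ.
rewrite (big_setID J) [X in _ <= X](big_setID Z) /= setIC lerD2l.
apply: sum_le_dominating => [j _ | i j | ]; first exact: a_ge0.
  by rewrite !inE => /andP[iJ _] /andP[_ jJ]; exact: top.
by move: cardZ; rewrite -(cardsID J Z) -(cardsID Z J) setIC leq_add2l.
Qed.

Lemma exists_repeat (T : finType) (x : nat -> T) :
  exists i j, (i < j)%N /\ x i = x j.
Proof.
pose f := fun i : 'I_#|T|.+1 => x i.
have [/injectiveP f_inj | /injectivePn [i [j ne_ij e]]] := boolP (injectiveb f).
  by move: (leq_card f f_inj); rewrite card_ord ltnn.
have [lt_ij | lt_ji | eq_ij] := ltngtP i j.
- by exists i, j.
- by exists j, i.
- by move: ne_ij; rewrite (val_inj eq_ij) eqxx.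
Qed.

Lemma eventually_periodic (T : finType) (F : T -> T) (x : nat -> T) :
  (forall t, x t.+1 = F (x t)) ->
  exists t0 p, (0 < p)%N /\ forall t, (t0 <= t)%N -> x (t + p)%N = x t.
Proof.
move=> step; have [i [j [lt_ij e]]] := exists_repeat x.
exists i, (j - i)%N; split; first by rewrite subn_gt0.
move=> t /subnKC <-; elim: (t - i)%N => [|d IH].
  by rewrite addn0 subnKC ?(ltnW lt_ij).
by rewrite addnS addSn step IH -step.
Qed.

Section AlternatingIteration.

Variables (Z : finType) (X Y : Type).
Variables (BR : Z -> X * Y) (top : X -> Y -> Z).
Variables (zt : nat -> Z) (xt : nat -> X) (yt : nat -> Y).
Hypothesis step_xy : forall t, (xt t.+1, yt t.+1) = BR (zt t).
Hypothesis step_z : forall t, zt t.+1 = top (xt t) (yt t).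

(* The pair (z_{t+1}, z_t) evolves by a self-map of Z * Z and determines
   the triple at time t+1, so the iterates are eventually periodic. *)
Lemma iterates_eventually_periodic :
  exists t0 p, (0 < p)%N /\ forall t, (t0 <= t)%N ->
    (zt (t + p)%N, xt (t + p)%N, yt (t + p)%N) = (zt t, xt t, yt t).
Proof.
pose F (w : Z * Z) := (top (BR w.2).1 (BR w.2).2, w.1).
have pair_step t : (zt t.+2, zt t.+1) = F (zt t.+1, zt t).
  by rewrite /F /= step_z -step_xy.
have [t0 [p [p_gt0 per]]] := eventually_periodic pair_step.
exists t0.+1, p; split=> // -[|t] // /per [ez1 ez0].
have := step_xy (t + p)%N; rewrite ez0 -step_xy => -[ex ey].
by rewrite addSn ez1 ex ey.
Qed.

Lemma stationary_fixed_point zb xb yb :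
  (exists t0, forall t, (t0 <= t)%N -> (zt t, xt t, yt t) = (zb, xb, yb)) ->
  BR zb = (xb, yb) /\ zb = top xb yb.
Proof.
move=> [t0 const].
have [z0 x0 y0] := const t0 (leqnn _).
have [z1 x1 y1] := const t0.+1 (leqnSn _).
by split; [rewrite -z0 -step_xy x1 y1 | rewrite -z1 step_z x0 y0].
Qed.

End AlternatingIteration.

Lemma quad_diagz (R : rcfType) n (g : 'cV[R]_n) z :
  (g^T *m diagz R z *m g) 0 0 = \sum_(j in [set j | z j]) g j 0 ^+ 2.
Proof.
rewrite /diagz mul_mx_diag mxE [RHS]big_mkcond /=.
apply: eq_bigr => j _; rewrite !mxE inE.
by case: (z j); rewrite /= ?mulr1 ?mulr0 ?mul0r // expr2.
Qed.

Lemma Zs_card n s (z : {ffun 'I_n -> bool}) : Zs s z = (#|[set j | z j]| <= s)%N.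
Proof.
rewrite /Zs; congr (_ <= _)%N; rewrite -sum1_card [RHS]big_mkcond /=.
by apply: eq_bigr => j _; rewrite inE; case: (z j).
Qed.

Lemma support_indic n (J : {set 'I_n}) : [set j | indic J j] = J.
Proof. by apply/setP => j; rewrite inE ffunE. Qed.

Lemma Zs_indic_top (R : numDomainType) n s (g : 'cV[R]_n) J :
  is_top_s s g J -> Zs s (indic J).
Proof. by case=> cardJ _; rewrite Zs_card support_indic cardJ. Qed.

Lemma L_top_minimal (R : rcfType) n m k s (hk : (k <= n)%N) lam v c
    (A : 'M[R]_(m, n)) b eta J alpha beta z :
  0 <= eta -> is_top_s s (gamma hk lam v c A alpha beta) J -> Zs s z ->
  Lfun hk lam v c A b eta (indic J) alpha beta
  <= Lfun hk lam v c A b eta z alpha beta.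
Proof.
move=> eta_ge0 [cardJ top]; rewrite Zs_card => cardz.
rewrite /Lfun !quad_diagz support_indic lerD2l lerN2.
apply: ler_wpM2l; first by rewrite divr_ge0 ?ler0n.
apply: sum_top_set => [j | i j iJ jJ | ]; rewrite ?cardJ //; first exact: sqr_ge0.
by rewrite -[_ ^+ 2]real_normK ?num_real // -[X in _ <= X]real_normK ?num_real
   // lerXn2r ?nnegrE ?normr_ge0 ?top.
Qed.

Unset Implicit Arguments.

Theorem proposition3p3 (R : rcfType) (n m k s : nat)
  (Q : 'M[R]_n) (lam : 'I_n -> R) (v : 'I_n -> 'cV[R]_n)
  (c : 'cV[R]_n) (A : 'M[R]_(m, n)) (b : 'cV[R]_m) (eta : R)
  (hk : (k <= n)%N)
  (J : 'cV[R]_k -> 'cV[R]_m -> {set 'I_n})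
  (BR : {ffun 'I_n -> bool} -> 'cV[R]_k * 'cV[R]_m)
  (zt : nat -> {ffun 'I_n -> bool}) (alt : nat -> 'cV[R]_k)
  (bet : nat -> 'cV[R]_m) :
  Q^T = Q ->
  (forall x : 'cV[R]_n, 0 <= (x^T *m Q *m x) 0 0) ->
  Q = \sum_(i < n) lam i *: (v i *m (v i)^T) ->
  (forall i j : 'I_n, (i <= j)%N -> lam j <= lam i) ->
  (forall i, 0 <= lam i) ->
  (forall i j, ((v i)^T *m v j) 0 0 = (i == j)%:R) ->
  0 < eta -> (0 < s)%N -> (s <= n)%N ->
  (* J(alpha, beta): the s indices of largest |gamma_j|, fixed tie-breaking *)
  (forall alpha beta, is_top_s s (gamma hk lam v c A alpha beta) (J alpha beta)) ->
  (* BR(z): a maximizer of L(z, ., .) over R^k x R^m_+ *)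
  (forall z, Zs s z ->
     nonneg_vec (BR z).2 /\
     (forall alpha beta, nonneg_vec beta ->
        Lfun hk lam v c A b eta z alpha beta
        <= Lfun hk lam v c A b eta z (BR z).1 (BR z).2)) ->
  Zs s (zt 0%N) ->
  (forall t, (alt t.+1, bet t.+1) = BR (zt t)) ->
  (forall t, zt t.+1 = indic (J (alt t) (bet t))) ->
  (exists t0 p, (0 < p)%N /\
     forall t, (t0 <= t)%N ->
       (zt (t + p)%N, alt (t + p)%N, bet (t + p)%N) = (zt t, alt t, bet t))
  /\
  (forall zb ab bb,
     (exists t0, forall t, (t0 <= t)%N -> (zt t, alt t, bet t) = (zb, ab, bb)) ->
     [/\ Zs s zb,
         nonneg_vec bb,
         (* zb optimal for the outer problem: max L(zb,.,.) <= max L(z,.,.) *)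
         (forall z, Zs s z -> forall alpha beta, nonneg_vec beta ->
            exists alpha' beta', nonneg_vec beta' /\
              Lfun hk lam v c A b eta zb alpha beta
              <= Lfun hk lam v c A b eta z alpha' beta'),
         (forall alpha beta, nonneg_vec beta ->
            Lfun hk lam v c A b eta zb alpha beta
            <= Lfun hk lam v c A b eta zb ab bb) &
         (forall z, Zs s z ->
            Lfun hk lam v c A b eta zb ab bb
            <= Lfun hk lam v c A b eta z ab bb)]).
Proof.
move=> _ _ _ _ _ _ eta_gt0 _ _ Jtop BRmax _ step_ab step_z.
pose top alpha beta := indic (J alpha beta).
split; first exact: (iterates_eventually_periodic (top := top) step_ab step_z).
move=> zb ab bb stationary.
have [BRzb zb_top] := stationary_fixed_point (top := top) step_ab step_z stationary.
have Zs_zb : Zs s zb by rewrite zb_top; exact: Zs_indic_top (Jtop ab bb).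
have [bb_ge0 inner_max] := BRmax zb Zs_zb; rewrite BRzb in bb_ge0 inner_max.
have outer_min z : Zs s z ->
    Lfun hk lam v c A b eta zb ab bb <= Lfun hk lam v c A b eta z ab bb.
  by rewrite zb_top; apply: L_top_minimal; rewrite ?ltW.
split=> // z Zs_z alpha beta beta_ge0; exists ab, bb; split=> //.
exact: le_trans (inner_max _ _ beta_ge0) (outer_min z Zs_z).
Qed.
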